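(* Let $p\in(0,1)$, $d\ge2$ an integer, $\alpha>0$, $\beta=(d-1)\big(\frac{p}{d-p}-\alpha\big)$ and $0<s<\beta$. Define for $u\in(-1,0)$ $$f_{\alpha,s}(u)=\ln(1+pu)+\alpha\ln(-u)-(d-1)\Big(\frac{p}{d-p}-\alpha\Big)\ln(1+u)+s\big(\ln(1+u)-\ln(1-1/d)\big).$$ Then $f_{\alpha,s}$ has two stationary points $u_{-,s},u_{+,s}$ with $-1<u_{-,s}<-1/d<u_{+,s}<0$. Moreover, $u_{-,s}$ is strictly decreasing in $s$ and $u_{+,s}$ is strictly increasing in $s$. *)

From Stdlib Require Import Reals.
Open Scope R_scope.

Definition beta_ (p : R) (d : nat) (alpha : R) : R :=
  (INR d - 1) * (p / (INR d - p) - alpha).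

Definition f_as (p : R) (d : nat) (alpha s : R) (u : R) : R :=
  ln (1 + p * u) + alpha * ln (- u)
  - (INR d - 1) * (p / (INR d - p) - alpha) * ln (1 + u)
  + s * (ln (1 + u) - ln (1 - 1 / INR d)).

Definition stationary (g : R -> R) (u : R) : Prop := derivable_pt_lim g u 0.

(* The derivative of f is N(u) / (u (1+u) (1+pu)) with N a quadratic, so on (-1,0) the
   stationary points are the roots of N. Writing c = beta - s, N is positive at -1 and 0
   (values c(1-p) and alpha) and equals -(d-p)s/d^2 < 0 at -1/d; hence N is convex with
   one root on each side of -1/d. Increasing s decreases N strictly on (-1,0), so the new N
   is negative at the old roots, which therefore lie strictly between the new ones. *)

From Stdlib Require Import Reals Lra Psatz.
From Coquelicot Require Import Coquelicot.
Open Scope R_scope.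

Definition quad (a b c u : R) : R := a * u * u + b * u + c.
Definition quad_disc (a b c : R) : R := b * b - 4 * a * c.
Definition root_lo (a b c : R) : R := (- b - sqrt (quad_disc a b c)) / (2 * a).
Definition root_hi (a b c : R) : R := (- b + sqrt (quad_disc a b c)) / (2 * a).

Section Quadratic.

Variables a b c : R.

Lemma quad_lead_pos x0 x1 x2 : x0 < x1 < x2 ->
  quad a b c x1 < quad a b c x0 -> quad a b c x1 < quad a b c x2 -> 0 < a.
Proof.
  intros Hx H0 H2.
  assert (Hsec : a * ((x2 - x1) * (x1 - x0) * (x2 - x0)) =
     (x2 - x1) * (quad a b c x0 - quad a b c x1)
     + (x1 - x0) * (quad a b c x2 - quad a b c x1)) by (unfold quad; ring).
  assert (0 < (x2 - x1) * (x1 - x0) * (x2 - x0)) by (repeat apply Rmult_lt_0_compat; lra).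
  nra.
Qed.

Lemma quad_disc_pos u : 0 < a -> quad a b c u < 0 -> 0 < quad_disc a b c.
Proof.
  unfold quad, quad_disc; intros Ha Hu.
  assert (4 * a * (a * u * u + b * u + c)
          = (2 * a * u + b) * (2 * a * u + b) - (b * b - 4 * a * c)) by ring.
  generalize (Rle_0_sqr (2 * a * u + b)); unfold Rsqr; nra.
Qed.

Hypotheses (a_gt0 : 0 < a) (disc_ge0 : 0 <= quad_disc a b c).

Lemma quad_factor u : quad a b c u = a * (u - root_lo a b c) * (u - root_hi a b c).
Proof.
  unfold quad, root_lo, root_hi.
  assert (Hs := sqrt_sqrt _ disc_ge0); unfold quad_disc in *.
  set (r := sqrt _) in *.
  replace c with ((b * b - r * r) / (4 * a)) by (rewrite Hs; field; lra).
  field; lra.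
Qed.

Lemma root_lo_le_hi : root_lo a b c <= root_hi a b c.
Proof.
  unfold root_lo, root_hi, Rdiv.
  apply Rmult_le_compat_r; [left; apply Rinv_0_lt_compat; lra|].
  generalize (sqrt_pos (quad_disc a b c)); lra.
Qed.

Lemma quad_eq0 u : quad a b c u = 0 <-> u = root_lo a b c \/ u = root_hi a b c.
Proof.
  rewrite quad_factor; split.
  - intros H; apply Rmult_integral in H as [H | H];
      [apply Rmult_integral in H as [H | H]|]; lra.
  - intros [-> | ->]; ring.
Qed.

Lemma quad_neg_between u : quad a b c u < 0 -> root_lo a b c < u < root_hi a b c.
Proof.
  rewrite quad_factor, Rmult_assoc; intros Hu.
  assert (Hneg : (u - root_lo a b c) * (u - root_hi a b c) < 0) by nra.
  generalize root_lo_le_hi; intros Hle.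
  destruct (Rle_or_lt u (root_lo a b c)), (Rle_or_lt (root_hi a b c) u); nra.
Qed.

Lemma quad_pos_outside u : 0 < quad a b c u -> u < root_lo a b c \/ root_hi a b c < u.
Proof.
  rewrite quad_factor, Rmult_assoc; intros Hu.
  assert (Hpos : 0 < (u - root_lo a b c) * (u - root_hi a b c)) by nra.
  destruct (Rlt_or_le u (root_lo a b c)), (Rlt_or_le (root_hi a b c) u); nra.
Qed.

Lemma quad_roots_separate x0 x1 x2 :
  0 < quad a b c x0 -> quad a b c x1 < 0 -> 0 < quad a b c x2 -> x0 < x1 < x2 ->
  x0 < root_lo a b c < x1 /\ x1 < root_hi a b c < x2.
Proof.
  intros H0 H1 H2 Hx.
  generalize (quad_neg_between _ H1) (quad_pos_outside _ H0) (quad_pos_outside _ H2).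
  lra.
Qed.

End Quadratic.

Definition crit_a (p alpha c : R) : R := p * (1 + alpha - c).
Definition crit_b (p alpha c : R) : R := p + alpha * (1 + p) - c.
Definition crit_quad (p alpha c u : R) : R := quad (crit_a p alpha c) (crit_b p alpha c) alpha u.
Definition crit_lo (p alpha c : R) : R := root_lo (crit_a p alpha c) (crit_b p alpha c) alpha.
Definition crit_hi (p alpha c : R) : R := root_hi (crit_a p alpha c) (crit_b p alpha c) alpha.

Lemma crit_quadE p alpha c u :
  crit_quad p alpha c u = p * u * (1 + u) + alpha * (1 + u) * (1 + p * u) - c * u * (1 + p * u).
Proof. unfold crit_quad, crit_a, crit_b, quad; ring. Qed.

Lemma crit_quad_lt_in_c p alpha c1 c2 u : c1 < c2 -> -1 < u < 0 -> 0 < 1 + p * u ->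
  crit_quad p alpha c1 u < crit_quad p alpha c2 u.
Proof.
  intros Hc Hu Hpu; rewrite !crit_quadE.
  assert (0 < (c2 - c1) * (- u * (1 + p * u))) by (repeat apply Rmult_lt_0_compat; lra).
  nra.
Qed.

Lemma f_as_derive p d alpha s u : -1 < u < 0 -> 0 < 1 + p * u ->
  derivable_pt_lim (f_as p d alpha s) u
    (crit_quad p alpha (beta_ p d alpha - s) u / (u * (1 + u) * (1 + p * u))).
Proof.
  intros Hu Hpu; apply is_derive_Reals.
  unfold f_as; fold (beta_ p d alpha); auto_derive.
  - repeat split; lra.
  - rewrite crit_quadE; field; repeat split; lra.
Qed.

Lemma stationary_f_as_iff p d alpha s u : -1 < u < 0 -> 0 < 1 + p * u ->
  stationary (f_as p d alpha s) u <-> crit_quad p alpha (beta_ p d alpha - s) u = 0.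
Proof.
  intros Hu Hpu; unfold stationary.
  assert (Hder := f_as_derive p d alpha s u Hu Hpu).
  split.
  - intros H0; assert (Hq := uniqueness_limite _ _ _ _ Hder H0).
    apply (f_equal (Rmult (u * (1 + u) * (1 + p * u)))) in Hq.
    rewrite Rmult_0_r in Hq; rewrite <- Hq; field; repeat split; lra.
  - intros Hq; rewrite Hq, Rdiv_0_l in Hder; exact Hder.
Qed.

Lemma crit_quad_at_m1 p alpha c : crit_quad p alpha c (-1) = c * (1 - p).
Proof. rewrite crit_quadE; ring. Qed.

Lemma crit_quad_at_0 p alpha c : crit_quad p alpha c 0 = alpha.
Proof. rewrite crit_quadE; ring. Qed.

Lemma crit_quad_at_inv_d p d alpha c : INR d <> 0 -> INR d - p <> 0 ->
  crit_quad p alpha c (-1 / INR d) =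
  - ((INR d - p) * (beta_ p d alpha - c) / (INR d * INR d)).
Proof. intros Hd Hdp; rewrite crit_quadE; unfold beta_; field; auto. Qed.

Section CriticalPoints.

Variables (p : R) (d : nat) (alpha : R).
Hypotheses (hp : 0 < p < 1) (hd : (2 <= d)%nat) (halpha : 0 < alpha).

Let d_ge2 : 2 <= INR d.
Proof. apply le_INR in hd; simpl in hd; lra. Qed.

Let inv_d_bounds : -1 < -1 / INR d < 0.
Proof. split; apply (Rmult_lt_reg_r (INR d)); field_simplify; lra. Qed.

Section FixedC.

Variable c : R.
Hypothesis hc : 0 < c < beta_ p d alpha.

Lemma crit_quad_sign :
  0 < crit_quad p alpha c (-1) /\ crit_quad p alpha c (-1 / INR d) < 0 /\
  0 < crit_quad p alpha c 0.
Proof.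
  rewrite crit_quad_at_m1, crit_quad_at_inv_d, crit_quad_at_0 by lra.
  assert (0 < (INR d - p) * (beta_ p d alpha - c) / (INR d * INR d))
    by (apply Rdiv_lt_0_compat; nra).
  split; [apply Rmult_lt_0_compat|]; lra.
Qed.

Lemma crit_quad_convex :
  0 < crit_a p alpha c /\ 0 <= quad_disc (crit_a p alpha c) (crit_b p alpha c) alpha.
Proof.
  destruct crit_quad_sign as (Hm1 & Hd & H0); unfold crit_quad in *.
  assert (Ha : 0 < crit_a p alpha c).
  { apply (quad_lead_pos _ (crit_b p alpha c) alpha (-1) (-1 / INR d) 0);
      [exact inv_d_bounds | lra | lra]. }
  split; [exact Ha|left; exact (quad_disc_pos _ _ _ _ Ha Hd)].
Qed.

Lemma crit_roots_bounds :
  -1 < crit_lo p alpha c < -1 / INR d /\ -1 / INR d < crit_hi p alpha c < 0.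
Proof.
  destruct crit_quad_convex as [Ha Hdisc]; destruct crit_quad_sign as (Hm1 & Hd & H0).
  exact (quad_roots_separate _ _ _ Ha Hdisc _ _ _ Hm1 Hd H0 inv_d_bounds).
Qed.

Lemma crit_quad_eq0 u :
  crit_quad p alpha c u = 0 <-> u = crit_lo p alpha c \/ u = crit_hi p alpha c.
Proof. destruct crit_quad_convex as [Ha Hdisc]; exact (quad_eq0 _ _ _ Ha Hdisc u). Qed.

Lemma crit_quad_neg_between u :
  crit_quad p alpha c u < 0 -> crit_lo p alpha c < u < crit_hi p alpha c.
Proof. destruct crit_quad_convex as [Ha Hdisc]; exact (quad_neg_between _ _ _ Ha Hdisc u). Qed.

End FixedC.

Lemma crit_roots_monotone c1 c2 : 0 < c1 -> c1 < c2 -> c2 < beta_ p d alpha ->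
  crit_lo p alpha c1 < crit_lo p alpha c2 /\ crit_hi p alpha c2 < crit_hi p alpha c1.
Proof.
  intros H1 H12 H2.
  assert (Hc1 : 0 < c1 < beta_ p d alpha) by lra.
  assert (Hc2 : 0 < c2 < beta_ p d alpha) by lra.
  assert (Hinside : forall r, -1 < r < 0 -> crit_quad p alpha c2 r = 0 ->
            crit_lo p alpha c1 < r < crit_hi p alpha c1).
  { intros r Hr Hr0; apply (crit_quad_neg_between c1 Hc1).
    rewrite <- Hr0; apply crit_quad_lt_in_c; [lra | lra | nra]. }
  destruct (crit_roots_bounds c2 Hc2) as [Hlo2 Hhi2].
  assert (Hlo : crit_lo p alpha c1 < crit_lo p alpha c2 < crit_hi p alpha c1).
  { apply Hinside; [lra|]. apply crit_quad_eq0; auto. }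
  assert (Hhi : crit_lo p alpha c1 < crit_hi p alpha c2 < crit_hi p alpha c1).
  { apply Hinside; [lra|]. apply crit_quad_eq0; auto. }
  lra.
Qed.

End CriticalPoints.

Theorem lemma5p10 (p : R) (d : nat) (alpha : R)
  (hp : 0 < p < 1) (hd : (2 <= d)%nat) (halpha : 0 < alpha) :
  exists um up : R -> R,
    (forall s, 0 < s < beta_ p d alpha ->
       -1 < um s /\ um s < -1 / INR d /\ -1 / INR d < up s /\ up s < 0 /\
       (forall u, -1 < u < 0 ->
          (stationary (f_as p d alpha s) u <-> u = um s \/ u = up s))) /\
    (forall s1 s2, 0 < s1 -> s1 < s2 -> s2 < beta_ p d alpha ->
       um s2 < um s1 /\ up s1 < up s2).
Proof.
  exists (fun s => crit_lo p alpha (beta_ p d alpha - s)),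
         (fun s => crit_hi p alpha (beta_ p d alpha - s)).
  split.
  - intros s Hs.
    assert (Hc : 0 < beta_ p d alpha - s < beta_ p d alpha) by lra.
    destruct (crit_roots_bounds p d alpha hp hd halpha _ Hc) as [Hlo Hhi].
    do 4 (split; [lra|]).
    intros u Hu.
    rewrite stationary_f_as_iff by (auto; nra).
    exact (crit_quad_eq0 p d alpha hp hd halpha _ Hc u).
  - intros s1 s2 H1 H12 H2.
    apply (crit_roots_monotone p d alpha hp hd halpha); lra.
Qed.
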